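(* For every term $M$ of the CCV $\lambda\mu$-calculus, $[\![M]\!]^{-1}=_{ccv}M$.
   Context: CCV $\lambda\mu$-calculus. Ordinary variables $x,y,z,\dots$ and continuation variables $k,l,\dots$ are disjoint. Terms $M ::= x \mid \lambda x.M \mid MM \mid (M\ \mathsf{where}\ x:=M) \mid \mu k.J$, jumps $J ::= [k]M \mid (J\ \mathsf{where}\ x:=M)$, where $(L\ \mathsf{where}\ x:=M)$ means $\mathsf{let}\ x=M\ \mathsf{in}\ L$ ($x$ bound in $L$ only). Terms are identified up to $\alpha$-conversion and the congruence generated by (E1) $(L\ \mathsf{where}\ x:=(M\ \mathsf{where}\ y:=N))=((L\ \mathsf{where}\ x:=M)\ \mathsf{where}\ y:=N)$ if $y$ not free in $L$; (E2) $((\mu k.J)\ \mathsf{where}\ x:=M)=\mu k.(J\ \mathsf{where}\ x:=M)$ if $k$ not free in $M$; (E3) $[k](L\ \mathsf{where}\ x:=M)=([k]L\ \mathsf{where}\ x:=M)$. Values $V$: variables and $\lambda$-abstractions; $N$ a non-value. $=_{ccv}$ is the smallest congruence containing ($z$ fresh): $NM\to(zM\ \mathsf{where}\ z:=N)$; $VN\to(Vz\ \mathsf{where}\ z:=N)$; $(\lambda x.M)V\to(M\ \mathsf{where}\ x:=V)$; $(M\ \mathsf{where}\ x:=V)\to M\{V/x\}$; $(M\ \mathsf{where}\ x:=\mu k.J)\to\mu k.J\{[k]\square\mapsto[k](M\ \mathsf{where}\ x:=\square)\}$; $[l]\mu k.J\to J\{l/k\}$; $\lambda x.Vx\to V$ ($x$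 not free in $V$); $(x\ \mathsf{where}\ x:=M)\to M$; $\mu k.[k]M\to M$ ($k$ not free in $M$); the context substitution replaces recursively each subjump $[k]Q$ with $k$ free by $[k](M\ \mathsf{where}\ x:=Q)$, and $J\{l/k\}$ replaces each such $[k]Q$ by $[l]Q$. Target calculus: sorted $\lambda$-calculus $T::=\lambda k.Q\mid WW$, $Q::=KW\mid TK$, $W::=x\mid\lambda x.T$, $K::=k\mid\lambda x.Q$. CPS translation (fresh bound variables): $\langle V\rangle[K]=KV^*$; $\langle V_1V_2\rangle[K]=V_1^*V_2^*K$; $\langle VN\rangle[K]=\langle N\rangle[\lambda y.V^*yK]$; $\langle NV\rangle[K]=\langle N\rangle[\lambda x.xV^*K]$; $\langle N_1N_2\rangle[K]=\langle N_1\rangle[\lambda x.\langle N_2\rangle[\lambda y.xyK]]$; $\langle (L\ \mathsf{where}\ x:=M)\rangle[K]=\langle M\rangle[\lambda x.\langle L\rangle[K]]$ (renaming $x$ if free in $K$); $\langle\mu k.J\rangle[K]=(\lambda k.\langle J\rangle)K$; $\langle[k]M\rangle=\langle M\rangle[k]$; $\langle (J\ \mathsf{where}\ x:=M)\rangle=\langle M\rangle[\lambda x.\langle J\rangle]$; $x^*=x$; $(\lambda x.M)^*=\lambda xk.\langle M\rangle[k]$; $[\![M]\!]=\lambda k.\langle M\rangle[k]$, computed from any syntax-tree representative. Inverse translation: $(\lambda k.Q)^{-1}=\mu k.Q^{-1}$; $(W_1W_2)^{-1}=W_1^{-1}W_2^{-1}$; $(KW)^{-1}=K^{-1}[W^{-1}]$;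 $(TK)^{-1}=K^{-1}[T^{-1}]$; $x^{-1}=x$; $(\lambda x.T)^{-1}=\lambda x.T^{-1}$; $k^{-1}=[k]\square$; $(\lambda x.Q)^{-1}=(Q^{-1}\ \mathsf{where}\ x:=\square)$, where $K^{-1}$ is a jump with one hole $\square$ and $K^{-1}[M]$ fills it with $M$. *)

(* Syntax uses de Bruijn indices, with two SEPARATE index spaces:
   ordinary variables (bound by Lam, Where, target WLam/KLam) and
   continuation variables (bound by Mu, target TLamK).  This makes
   alpha-conversion syntactic identity. *)
From Stdlib Require Import Arith.

Definition upr (f : nat -> nat) : nat -> nat :=
  fun n => match n with 0 => 0 | S m => S (f m) end.

Inductive term : Type :=
| Var : nat -> term
| Lam : term -> term
| App : term -> term -> term
| Where : term -> term -> term     (* (L where x := M): Where L M, x = ordinary 0 bound in L only *)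
| Mu : jump -> term
with jump : Type :=
| Jmp : nat -> term -> jump
| JWhere : jump -> term -> jump.   (* (J where x := M): x bound in J only *)

Definition isval (M : term) : bool :=
  match M with Var _ | Lam _ => true | _ => false end.

Fixpoint renT (f g : nat -> nat) (M : term) : term :=
  match M with
  | Var n => Var (f n)
  | Lam B => Lam (renT (upr f) g B)
  | App A B => App (renT f g A) (renT f g B)
  | Where L N => Where (renT (upr f) g L) (renT f g N)
  | Mu J => Mu (renJ f (upr g) J)
  end
with renJ (f g : nat -> nat) (J : jump) : jump :=
  match J with
  | Jmp k M => Jmp (g k) (renT f g M)
  | JWhere J' N => JWhere (renJ (upr f) g J') (renT f g N)
  end.

Definition upsO (s : nat -> term) : nat -> term :=
  fun n => match n with 0 => Var 0 | S m => renT S (fun k => k) (s m) end.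
Definition upsK (s : nat -> term) : nat -> term :=
  fun n => renT (fun x => x) S (s n).

Fixpoint substT (s : nat -> term) (M : term) : term :=
  match M with
  | Var n => s n
  | Lam B => Lam (substT (upsO s) B)
  | App A B => App (substT s A) (substT s B)
  | Where L N => Where (substT (upsO s) L) (substT s N)
  | Mu J => Mu (substJ (upsK s) J)
  end
with substJ (s : nat -> term) (J : jump) : jump :=
  match J with
  | Jmp k M => Jmp k (substT s M)
  | JWhere J' N => JWhere (substJ (upsO s) J') (substT s N)
  end.

Definition subst0 (V : term) : nat -> term :=
  fun n => match n with 0 => V | S m => Var m end.

Definition kren0 (l : nat) : nat -> nat :=
  fun n => match n with 0 => l | S m => m end.

(* Context substitution  {[k][] |-> [k](M where x := [])}, applied recursively:
   every subjump [k]Q with k free (continuation index k at the current depth)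
   becomes [k](M where x := Q'), Q' being Q with the substitution applied.
   M is a term whose ordinary variable 0 is the bound x. *)
Fixpoint ctxT (k : nat) (M : term) (N : term) : term :=
  match N with
  | Var n => Var n
  | Lam B => Lam (ctxT k (renT (upr S) (fun c => c) M) B)
  | App A B => App (ctxT k M A) (ctxT k M B)
  | Where L P => Where (ctxT k (renT (upr S) (fun c => c) M) L) (ctxT k M P)
  | Mu J => Mu (ctxJ (S k) (renT (fun x => x) S M) J)
  end
with ctxJ (k : nat) (M : term) (J : jump) : jump :=
  match J with
  | Jmp l Q => if Nat.eqb l k then Jmp l (Where M (ctxT k M Q))
               else Jmp l (ctxT k M Q)
  | JWhere J' P => JWhere (ctxJ k (renT (upr S) (fun c => c) M) J') (ctxT k M P)
  end.

Definition liftO (M : term) : term := renT S (fun k => k) M.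
Definition liftK (M : term) : term := renT (fun x => x) S M.

(* Base rules of =ccv (z fresh is realised by lifting), together with the
   structural equations E1-E3 (terms are identified up to them). *)
Inductive ruleT : term -> term -> Prop :=
| r_NM N M : isval N = false ->
    ruleT (App N M) (Where (App (Var 0) (liftO M)) N)
| r_VN V N : isval V = true -> isval N = false ->
    ruleT (App V N) (Where (App (liftO V) (Var 0)) N)
| r_beta B V : isval V = true ->
    ruleT (App (Lam B) V) (Where B V)
| r_whereV M V : isval V = true ->
    ruleT (Where M V) (substT (subst0 V) M)
| r_whereMu M J :
    ruleT (Where M (Mu J)) (Mu (ctxJ 0 (liftK M) J))
| r_eta V : isval V = true ->
    ruleT (Lam (App (liftO V) (Var 0))) V
| r_whereVar M :
    ruleT (Where (Var 0) M) M
| r_muJmp M :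
    ruleT (Mu (Jmp 0 (liftK M))) M
| e1T L M N :            (* y not free in L: L is lifted past y *)
    ruleT (Where L (Where M N))
          (Where (Where (renT (upr S) (fun k => k) L) M) N)
| e2 J M :               (* k not free in M *)
    ruleT (Where (Mu J) M) (Mu (JWhere J (liftK M))).

Inductive ruleJ : jump -> jump -> Prop :=
| r_jmpMu l J :
    ruleJ (Jmp l (Mu J)) (renJ (fun x => x) (kren0 l) J)
| e1J J M N :
    ruleJ (JWhere J (Where M N))
          (JWhere (JWhere (renJ (upr S) (fun k => k) J) M) N)
| e3 k L M :
    ruleJ (Jmp k (Where L M)) (JWhere (Jmp k L) M).

Inductive ccvT : term -> term -> Prop :=
| cT_rule a b : ruleT a b -> ccvT a b
| cT_refl a : ccvT a a
| cT_sym a b : ccvT a b -> ccvT b a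
| cT_trans a b c : ccvT a b -> ccvT b c -> ccvT a c
| cT_lam a b : ccvT a b -> ccvT (Lam a) (Lam b)
| cT_appl a b c : ccvT a b -> ccvT (App a c) (App b c)
| cT_appr a b c : ccvT a b -> ccvT (App c a) (App c b)
| cT_wherel a b c : ccvT a b -> ccvT (Where a c) (Where b c)
| cT_wherer a b c : ccvT a b -> ccvT (Where c a) (Where c b)
| cT_mu j j' : ccvJ j j' -> ccvT (Mu j) (Mu j')
with ccvJ : jump -> jump -> Prop :=
| cJ_rule a b : ruleJ a b -> ccvJ a b
| cJ_refl a : ccvJ a a
| cJ_sym a b : ccvJ a b -> ccvJ b a
| cJ_trans a b c : ccvJ a b -> ccvJ b c -> ccvJ a c
| cJ_jmp k a b : ccvT a b -> ccvJ (Jmp k a) (Jmp k b)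
| cJ_wherel a b c : ccvJ a b -> ccvJ (JWhere a c) (JWhere b c)
| cJ_wherer a b c : ccvT a b -> ccvJ (JWhere c a) (JWhere c b).

Notation "M =ccv N" := (ccvT M N) (at level 70).

Inductive tT : Type :=
| TLamK : tQ -> tT
| TApp : tW -> tW -> tT
with tQ : Type :=
| QK : tK -> tW -> tQ
| QT : tT -> tK -> tQ
with tW : Type :=
| WVar : nat -> tW
| WLam : tT -> tW
with tK : Type :=
| KVar : nat -> tK
| KLam : tQ -> tK.

Fixpoint trenT (f g : nat -> nat) (T : tT) : tT :=
  match T with
  | TLamK Q => TLamK (trenQ f (upr g) Q)
  | TApp W1 W2 => TApp (trenW f g W1) (trenW f g W2)
  end
with trenQ (f g : nat -> nat) (Q : tQ) : tQ :=
  match Q with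
  | QK K W => QK (trenK f g K) (trenW f g W)
  | QT T K => QT (trenT f g T) (trenK f g K)
  end
with trenW (f g : nat -> nat) (W : tW) : tW :=
  match W with
  | WVar n => WVar (f n)
  | WLam T => WLam (trenT (upr f) g T)
  end
with trenK (f g : nat -> nat) (K : tK) : tK :=
  match K with
  | KVar n => KVar (g n)
  | KLam Q => KLam (trenQ (upr f) g Q)
  end.

(* ---------- CPS translation ----------
   ro / rk map source ordinary / continuation indices to target indices;
   fresh target binders (y, x in lambda x. x V* K, k in (lambda x k. ...))
   shift these maps and the continuation K. *)
Fixpoint cpsT (ro rk : nat -> nat) (M : term) (K : tK) {struct M} : tQ :=
  match M with
  | Var n => QK K (WVar (ro n))
  | Lam B => QK K (WLam (TLamK (cpsT (upr ro) (fun n => S (rk n)) B (KVar 0))))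
  | App A B =>
      if isval A then
        if isval B then QT (TApp (vstar ro rk A) (vstar ro rk B)) K
        else (* <V N>[K] = <N>[\y. V* y K] *)
          cpsT ro rk B
            (KLam (QT (TApp (vstar (fun n => S (ro n)) rk A) (WVar 0))
                      (trenK S (fun k => k) K)))
      else
        if isval B then (* <N V>[K] = <N>[\x. x V* K] *)
          cpsT ro rk A
            (KLam (QT (TApp (WVar 0) (vstar (fun n => S (ro n)) rk B))
                      (trenK S (fun k => k) K)))
        else (* <N1 N2>[K] = <N1>[\x.<N2>[\y. x y K]] *)
          cpsT ro rk A
            (KLam (cpsT (fun n => S (ro n)) rk B
                     (KLam (QT (TApp (WVar 1) (WVar 0))
                               (trenK (fun n => S (S n)) (fun k => k) K)))))
  | Where L N => (* <N>[\x.<L>[K]] *)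
      cpsT ro rk N (KLam (cpsT (upr ro) rk L (trenK S (fun k => k) K)))
  | Mu J => QT (TLamK (cpsJ ro (upr rk) J)) K
  end
with vstar (ro rk : nat -> nat) (V : term) {struct V} : tW :=
  match V with
  | Var n => WVar (ro n)
  | Lam B => WLam (TLamK (cpsT (upr ro) (fun n => S (rk n)) B (KVar 0)))
  | _ => WVar 0 (* never used: V* is only applied to values *)
  end
with cpsJ (ro rk : nat -> nat) (J : jump) {struct J} : tQ :=
  match J with
  | Jmp k M => cpsT ro rk M (KVar (rk k))
  | JWhere J' N => cpsT ro rk N (KLam (cpsJ (upr ro) rk J'))
  end.

Definition cps (M : term) : tT :=
  TLamK (cpsT (fun n => n) S M (KVar 0)).

Fixpoint invT (T : tT) : term :=
  match T with
  | TLamK Q => Mu (invQ Q)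
  | TApp W1 W2 => App (invW W1) (invW W2)
  end
with invQ (Q : tQ) : jump :=
  match Q with
  | QK K W => invK K (invW W)
  | QT T K => invK K (invT T)
  end
with invW (W : tW) : term :=
  match W with
  | WVar n => Var n
  | WLam T => Lam (invT T)
  end
with invK (K : tK) (M : term) : jump :=
  match K with
  | KVar k => Jmp k M
  | KLam Q => JWhere (invQ Q) M
  end.

(* Up to the renamings ro, rk relating source and target variables, the
   inverse of <M>[K] is K^{-1}[M]; this is proved by induction on M.  Whenever
   <_>[K] introduces a continuation \x.(...), its inverse is a "where" that
   e3 or e1 moves out of K^{-1}, and the let-introduction rules NM and VN of
   =ccv, read backwards, restore the application.  Hence [[M]]^{-1} = mu k.[k]M,
   which is M by the rule mu k.[k]M -> M. *)


Scheme term_ind_mut := Induction for term Sort Prop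
  with jump_ind_mut := Induction for jump Sort Prop.
Combined Scheme term_jump_ind from term_ind_mut, jump_ind_mut.

Scheme tT_ind_mut := Induction for tT Sort Prop
  with tQ_ind_mut := Induction for tQ Sort Prop
  with tW_ind_mut := Induction for tW Sort Prop
  with tK_ind_mut := Induction for tK Sort Prop.
Combined Scheme target_ind from tT_ind_mut, tQ_ind_mut, tW_ind_mut, tK_ind_mut.

Lemma upr_ext f f' : (forall n, f n = f' n) -> forall n, upr f n = upr f' n.
Proof. intros H [|n]; simpl; congruence. Qed.

Lemma upr_comp f f' n : upr f (upr f' n) = upr (fun x => f (f' x)) n.
Proof. destruct n; reflexivity. Qed.

Lemma ren_ext :
  (forall M f f' g g', (forall n, f n = f' n) -> (forall n, g n = g' n) ->
     renT f g M = renT f' g' M) /\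
  (forall J f f' g g', (forall n, f n = f' n) -> (forall n, g n = g' n) ->
     renJ f g J = renJ f' g' J).
Proof. apply term_jump_ind; intros; simpl; f_equal; eauto using upr_ext. Qed.

Lemma ren_comp :
  (forall M f g f' g',
     renT f g (renT f' g' M) = renT (fun x => f (f' x)) (fun x => g (g' x)) M) /\
  (forall J f g f' g',
     renJ f g (renJ f' g' J) = renJ (fun x => f (f' x)) (fun x => g (g' x)) J).
Proof.
  apply term_jump_ind; intros; simpl; f_equal; auto;
    rewrite H; first [apply (proj1 ren_ext) | apply (proj2 ren_ext)];
    auto using upr_comp.
Qed.

Lemma isval_renT f g M : isval (renT f g M) = isval M.
Proof. destruct M; reflexivity. Qed.

Lemma liftO_renT f g M : liftO (renT f g M) = renT (fun n => S (f n)) g M.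
Proof. unfold liftO. rewrite (proj1 ren_comp). reflexivity. Qed.

Lemma liftK_renT f g M : liftK (renT f g M) = renT f (fun n => S (g n)) M.
Proof. unfold liftK. rewrite (proj1 ren_comp). reflexivity. Qed.

Lemma inv_tren :
  (forall T f g, invT (trenT f g T) = renT f g (invT T)) /\
  (forall Q f g, invQ (trenQ f g Q) = renJ f g (invQ Q)) /\
  (forall W f g, invW (trenW f g W) = renT f g (invW W)) /\
  (forall K f g M, invK (trenK f g K) (renT f g M) = renJ f g (invK K M)).
Proof.
  apply target_ind; intros; simpl;
    repeat first [rewrite H | rewrite H0 | rewrite H1]; reflexivity.
Qed.

Lemma invQ_trenQ f g Q : invQ (trenQ f g Q) = renJ f g (invQ Q).
Proof. apply inv_tren. Qed.

Lemma invK_ccv K M N : M =ccv N -> ccvJ (invK K M) (invK K N).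
Proof. destruct K; simpl; intro; [apply cJ_jmp | apply cJ_wherer]; assumption. Qed.

Lemma invK_where K L N :
  ccvJ (invK K (Where L N)) (JWhere (invK (trenK S (fun k => k) K) L) N).
Proof.
  destruct K; simpl.
  - apply cJ_rule, e3.
  - rewrite invQ_trenQ. apply cJ_rule, e1J.
Qed.

Lemma invK_where_rule K M L N : ruleT M (Where L N) ->
  ccvJ (JWhere (invK (trenK S (fun k => k) K) L) N) (invK K M).
Proof.
  intro HM. eapply cJ_trans; [apply cJ_sym, invK_where |].
  apply invK_ccv, cT_sym, cT_rule, HM.
Qed.

Lemma invK_trenK_twice K M :
  invK (trenK S (fun k => k) (trenK S (fun k => k) K)) M =
  invK (trenK (fun n => S (S n)) (fun k => k) K) M.
Proof.
  destruct K; simpl; [reflexivity |].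
  rewrite !invQ_trenQ, (proj2 ren_comp). f_equal.
  apply ren_ext; [intros [|n] |]; reflexivity.
Qed.

Definition cps_inverse (M : term) : Prop :=
  (forall ro rk K, ccvJ (invQ (cpsT ro rk M K)) (invK K (renT ro rk M))) /\
  (forall ro rk, isval M = true -> invW (vstar ro rk M) =ccv renT ro rk M).

Definition cpsJ_inverse (J : jump) : Prop :=
  forall ro rk, ccvJ (invQ (cpsJ ro rk J)) (renJ ro rk J).

Lemma cps_inverse_var n : cps_inverse (Var n).
Proof. split; intros; [apply cJ_refl | apply cT_refl]. Qed.

Lemma cps_inverse_lam B : cps_inverse B -> cps_inverse (Lam B).
Proof.
  intros [IB _].
  assert (Hlam : forall ro rk,
    Lam (Mu (invQ (cpsT (upr ro) (fun n => S (rk n)) B (KVar 0))))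
      =ccv Lam (renT (upr ro) rk B)).
  { intros ro rk. apply cT_lam.
    eapply cT_trans; [apply cT_mu, IB |]. simpl.
    rewrite <- liftK_renT. apply cT_rule, r_muJmp. }
  split; intros; simpl; [apply invK_ccv |]; apply Hlam.
Qed.

Lemma cps_inverse_app A B :
  cps_inverse A -> cps_inverse B -> cps_inverse (App A B).
Proof.
  intros [IA IAv] [IB IBv]. split; [| intros ro rk Hv; discriminate Hv].
  intros ro rk K. simpl.
  destruct (isval A) eqn:HA, (isval B) eqn:HB; simpl.
  - apply invK_ccv. eapply cT_trans; [apply cT_appl, IAv | apply cT_appr, IBv]; auto.
  - eapply cJ_trans; [apply IB |]. simpl.
    eapply cJ_trans; [| apply invK_where_rule, r_VN; rewrite isval_renT; auto].
    apply cJ_wherel, invK_ccv, cT_appl. rewrite liftO_renT. auto.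
  - eapply cJ_trans; [apply IA |]. simpl.
    eapply cJ_trans; [| apply invK_where_rule, r_NM; rewrite isval_renT; auto].
    apply cJ_wherel, invK_ccv, cT_appr. rewrite liftO_renT. auto.
  - eapply cJ_trans; [apply IA |]. simpl.
    eapply cJ_trans; [| apply invK_where_rule, r_NM; rewrite isval_renT; auto].
    apply cJ_wherel.
    eapply cJ_trans; [apply IB |]. simpl.
    eapply cJ_trans;
      [| apply invK_where_rule, r_VN; [| unfold liftO; rewrite !isval_renT]; auto].
    rewrite invK_trenK_twice, liftO_renT. apply cJ_refl.
Qed.

Lemma cps_inverse_where L N :
  cps_inverse L -> cps_inverse N -> cps_inverse (Where L N).
Proof.
  intros [IL _] [IN _]. split; [| intros ro rk Hv; discriminate Hv].
  intros ro rk K. simpl.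
  eapply cJ_trans; [apply IN |]. simpl.
  eapply cJ_trans; [| apply cJ_sym, invK_where].
  apply cJ_wherel, IL.
Qed.

Lemma cps_inverse_mu J : cpsJ_inverse J -> cps_inverse (Mu J).
Proof.
  intro IJ. split; [| intros ro rk Hv; discriminate Hv].
  intros ro rk K. apply invK_ccv, cT_mu, IJ.
Qed.

Lemma cpsJ_inverse_jmp k M : cps_inverse M -> cpsJ_inverse (Jmp k M).
Proof. intros [IM _] ro rk. apply IM. Qed.

Lemma cpsJ_inverse_jwhere J N :
  cpsJ_inverse J -> cps_inverse N -> cpsJ_inverse (JWhere J N).
Proof.
  intros IJ [IN _] ro rk. simpl.
  eapply cJ_trans; [apply IN |]. apply cJ_wherel, IJ.
Qed.

Lemma cps_inverse_all : (forall M, cps_inverse M) /\ (forall J, cpsJ_inverse J).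
Proof.
  apply term_jump_ind; auto using cps_inverse_var, cps_inverse_lam,
    cps_inverse_app, cps_inverse_where, cps_inverse_mu, cpsJ_inverse_jmp,
    cpsJ_inverse_jwhere.
Qed.

Theorem corollary1p26 : forall M : term, invT (cps M) =ccv M.
Proof.
  intros M. unfold cps. simpl.
  eapply cT_trans; [apply cT_mu, (proj1 cps_inverse_all M) |].
  apply cT_rule, (r_muJmp M).
Qed.
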